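(* Let $\Lambda\subset\mathbb{D}$ be discrete and $f:\mathbb{D}\setminus\Lambda\to\mathbb{C}$. (1) Let $w_1,\dots,w_k\in\mathbb{D}$ (not necessarily distinct, and possibly meeting $\Lambda$), and let $g$ be defined on $(\mathbb{D}\setminus\Lambda)\cup\{w_1,\dots,w_k\}$ with $g=f$ on $\mathbb{D}\setminus\Lambda$. Then for every $n\ge1$, $$\mathbf{k}_n(f)\le\mathbf{k}_n(g)\le\max_{0\le r\le\min\{k,n\}}\{\mathbf{k}_{n-r}(f)+r\}\le\mathbf{k}_n(f)+k.$$ (2) If $g$ is defined on $\mathbb{D}\setminus\Lambda$ and $g(z)=f(z)$ for all $z\in\mathbb{D}\setminus\Lambda$ except at $k$ distinct points $z_1,\dots,z_k\in\mathbb{D}\setminus\Lambda$, then $\mathbf{k}_n(g)\le\mathbf{k}_n(f)+k$ for every $n\ge1$.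
   Context: $\mathbb{D}$ is the open unit disk; a set $\Lambda\subset\mathbb{D}$ is discrete if it is at most countable with accumulation points only on the unit circle. Pick matrix: $P_n(f;z_1,\dots,z_n)=\left[\frac{1-f(z_i)\overline{f(z_j)}}{1-z_i\overline{z_j}}\right]_{i,j=1}^n$ for distinct $z_i\in\mathrm{Dom}(f)$. $\mathrm{sq}_-P$ = number of negative eigenvalues (with multiplicity) of a Hermitian $P$. $\mathbf{k}_n(f)=\max\mathrm{sq}_-P_n(f;z_1,\dots,z_n)$ over distinct $z_1,\dots,z_n\in\mathrm{Dom}(f)$, and $\mathbf{k}_0(f)=0$. *)

From HB Require Import structures.
From mathcomp Require Import all_boot all_order all_algebra.
From mathcomp Require Import complex.
From mathcomp Require Import boolp classical_sets cardinality reals.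
Set Implicit Arguments. Unset Strict Implicit. Unset Printing Implicit Defensive.
Import Order.TTheory GRing.Theory Num.Theory.
Local Open Scope ring_scope.
Local Open Scope classical_set_scope.

(* Sequence of eigenvalues (with algebraic multiplicity) of a square complex
   matrix: the roots of its characteristic polynomial, which splits over the
   algebraically closed field R[i]. *)
Definition eigseq (R : realType) (n : nat) (A : 'M[R[i]]_n) : seq R[i] :=
  sval (closed_field_poly_normal (char_poly A)).

Definition sqneg (R : realType) (n : nat) (A : 'M[R[i]]_n) : nat :=
  count (fun x => x < 0) (eigseq A).

Definition pick_mx (R : realType) (n : nat) (f : R[i] -> R[i])
  (z : 'I_n -> R[i]) : 'M[R[i]]_n :=
  \matrix_(i < n, j < n) ((1 - f (z i) * (f (z j))^*) / (1 - z i * (z j)^*)).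

(* k_n(f) for f with domain Dom : the maximum of sq_- P_n(f; z_1..z_n) over
   distinct z_1, ..., z_n in Dom (0 if there are no such points; k_0 = 0). *)
Definition kn (R : realType) (Dom : set R[i]) (f : R[i] -> R[i]) (n : nat) : nat :=
  \max_(m < n.+1 | `[< exists z : 'I_n -> R[i],
        [/\ injective z, (forall i, Dom (z i)) & sqneg (pick_mx f z) = m] >]) m.

Definition disk (R : realType) : set R[i] := [set z | `|z| < 1].
Arguments disk R : clear implicits.

(* Lambda is discrete: a subset of the disk, at most countable, with no
   accumulation point in the disk (accumulation points only on the circle). *)
Definition discrete_in_disk (R : realType) (L : set R[i]) : Prop :=
  [/\ L `<=` disk R, countable L &
      forall z, `|z| < 1 -> exists2 r : R, 0 < r &
        finite_set (L `&` [set x | `|x - z| < (r%:C)%C])].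

(* The number of negative eigenvalues of a Hermitian matrix is the largest
   dimension of a subspace on which its form is negative definite: the spectral
   decomposition provides a negative definite and a positive semidefinite
   subspace of complementary dimensions, and a negative definite subspace meets
   every positive semidefinite one trivially.  Hence a p x p principal submatrix,
   such as the Pick matrix of p of the n points, has at most as many negative
   eigenvalues, and at most n - p fewer.  Given n points for g, discard the
   r <= min(k, n) of them lying outside the disk minus Lambda (or where g
   differs from f): what remains is a Pick matrix of f on n - r points.  The
   outer inequalities use that k_n(f) is nondecreasing in n, because the disk
   minus a discrete set is infinite, so every family of points extends. *)

From HB Require Import structures.
From mathcomp Require Import all_boot all_order all_algebra.
From mathcomp Require Import complex.
From mathcomp Require Import boolp classical_sets cardinality reals.
From mathcomp Require Import sesquilinear spectral zify lra.
Set Implicit Arguments. Unset Strict Implicit. Unset Printing Implicit Defensive.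
Import Order.TTheory GRing.Theory Num.Theory.
Local Open Scope ring_scope.

Section Inertia.
Variable C : numClosedFieldType.
Local Open Scope sesquilinear_scope.

Definition hform n (A : 'M[C]_n) (v : 'rV[C]_n) : C := (v *m A *m v ^t*) 0 0.

Lemma trmxC_mul m n p (A : 'M[C]_(m, n)) (B : 'M[C]_(n, p)) :
  (A *m B) ^t* = B ^t* *m A ^t*.
Proof. by rewrite trmx_mul map_mxM. Qed.

Lemma hform_conj m n (A : 'M[C]_n) (E : 'M[C]_(m, n)) v :
  hform (E *m A *m E ^t*) v = hform A (v *m E).
Proof. by rewrite /hform trmxC_mul !mulmxA. Qed.

Lemma hformN n (A : 'M[C]_n) v : hform A (- v) = hform A v.
Proof. by rewrite /hform linearN /= map_mxN mulNmx mulNmx mulmxN opprK. Qed.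

Lemma hform_diag n (d : 'rV[C]_n) (u : 'rV[C]_n) :
  hform (diag_mx d) u = \sum_l u 0 l * (u 0 l)^* * d 0 l.
Proof.
rewrite /hform mul_mx_diag !mxE; apply: eq_bigr => l _.
by rewrite !mxE mulrAC.
Qed.

Lemma hermsymmxE n (A : 'M[C]_n) : (A \is hermsymmx) = (A ^t* == A).
Proof. by rewrite is_hermitianmxE expr0 scale1r eq_sym. Qed.

Lemma hermsym_congr m n (A : 'M[C]_n) (E : 'M[C]_(m, n)) :
  A \is hermsymmx -> E *m A *m E ^t* \is hermsymmx.
Proof. by rewrite !hermsymmxE => /eqP hA; rewrite !trmxC_mul trmxCK hA mulmxA. Qed.

Lemma mxsub_diag_mx n m (h : 'I_m -> 'I_n) (d : 'rV[C]_n) : injective h ->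
  mxsub h h (diag_mx d) = diag_mx (colsub h d).
Proof. by move=> hi; apply/matrixP => i j; rewrite !mxE (inj_eq hi). Qed.

Lemma mxsub_rowsub1 n m (h : 'I_m -> 'I_n) (A : 'M[C]_n) :
  mxsub h h A = rowsub h 1%:M *m A *m (rowsub h 1%:M) ^t*.
Proof.
have -> : (rowsub h 1%:M) ^t* = colsub h (1%:M : 'M[C]_n).
  by apply/matrixP => i j; rewrite !mxE conjC_nat eq_sym.
by rewrite -rowsubE mulmx_colsub mulmx1; apply/matrixP => i j; rewrite !mxE.
Qed.

Lemma rowsub1_unitarymx n m (h : 'I_m -> 'I_n) :
  injective h -> rowsub h (1%:M : 'M[C]_n) \is unitarymx.
Proof.
move=> hi; apply/unitarymxP; have := mxsub_rowsub1 h 1%:M; rewrite mulmx1 => <-.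
by apply/matrixP => i j; rewrite !mxE (inj_eq hi).
Qed.

Lemma rowsub_unitarymx n m (h : 'I_m -> 'I_n) (P : 'M[C]_n) :
  injective h -> P \is unitarymx -> rowsub h P \is unitarymx.
Proof. by move=> hi Pu; rewrite rowsubE mul_unitarymx ?rowsub1_unitarymx. Qed.

Lemma unitarymx_row_free m n (M : 'M[C]_(m, n)) : M \is unitarymx -> row_free M.
Proof. by move/mxrank_unitary; rewrite /row_free => ->. Qed.

Lemma hform_diag_lt0 n (d u : 'rV[C]_n) :
  (forall l, d 0 l < 0) -> u != 0 -> hform (diag_mx d) u < 0.
Proof.
move=> d_lt0 /rV0Pn [l ul]; rewrite hform_diag (bigD1 l) //=.
apply: (@le_lt_trans _ _ (u 0 l * (u 0 l)^* * d 0 l)).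
  rewrite gerDl; apply: sumr_le0 => i _.
  by apply: mulr_ge0_le0; [exact: mul_conjC_ge0 | exact: ltW].
by rewrite pmulr_rlt0 ?mul_conjC_gt0.
Qed.

Lemma hform_diag_ge0 n (d u : 'rV[C]_n) :
  (forall l, 0 <= d 0 l) -> 0 <= hform (diag_mx d) u.
Proof.
move=> d_ge0; rewrite hform_diag; apply: sumr_ge0 => l _.
by apply: mulr_ge0; [exact: mul_conjC_ge0 | exact: d_ge0].
Qed.

Lemma spectral_hermsym n (A : 'M[C]_n) : A \is hermsymmx ->
  A = (spectralmx A) ^t* *m diag_mx (spectral_diag A) *m spectralmx A.
Proof.
move=> /hermitian_normalmx /orthomx_spectralP {1}->.
by rewrite invmx_unitary // spectral_unitarymx.
Qed.

Lemma hform_spectral_rowsub n m (A : 'M[C]_n) (h : 'I_m -> 'I_n) u :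
  A \is hermsymmx -> injective h ->
  hform A (u *m rowsub h (spectralmx A)) =
  hform (diag_mx (colsub h (spectral_diag A))) u.
Proof.
move=> hA hi; have Pu := spectral_unitarymx A.
rewrite {1}(spectral_hermsym hA) -hform_conj; congr hform.
rewrite rowsubE trmxC_mul !mulmxA !mulmxtVK //.
by rewrite -mxsub_rowsub1 mxsub_diag_mx.
Qed.

Lemma neg_psd_dim_le m q n (A : 'M[C]_n) (M : 'M[C]_(m, n)) (Q : 'M[C]_(q, n)) :
  (forall u, u != 0 -> hform A (u *m M) < 0) ->
  (forall u, 0 <= hform A (u *m Q)) -> row_free Q ->
  (m + q <= n)%N.
Proof.
move=> M_neg Q_psd Q_free; rewrite leqNgt; apply/negP => n_lt.
have : kermx (col_mx M Q) != 0.
  rewrite kermx_eq0 /row_free; apply: contraTneq n_lt => <-.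
  by rewrite -leqNgt rank_leq_col.
case/rowV0Pn => w /sub_kermxP; rewrite -[w]hsubmxK mul_row_col => /eqP.
rewrite addr_eq0 => /eqP uM_vQ w_neq0.
have [u0|u_neq0] := eqVneq (lsubmx w) 0.
  move: uM_vQ w_neq0; rewrite u0 mul0mx => /esym/eqP.
  by rewrite oppr_eq0 mulmx_free_eq0 // => /eqP->; rewrite row_mx0 eqxx.
by have := M_neg _ u_neq0; rewrite uM_vQ hformN (le_gtF (Q_psd _)).
Qed.

Definition negset n (A : 'M[C]_n) : {set 'I_n} := [set i | spectral_diag A 0 i < 0].

Lemma negset_negdef n (A : 'M[C]_n) : A \is hermsymmx ->
  exists M : 'M[C]_(#|negset A|, n), forall u, u != 0 -> hform A (u *m M) < 0.
Proof.
move=> hA; exists (rowsub enum_val (spectralmx A)) => u u_neq0.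
rewrite hform_spectral_rowsub //; last exact: enum_val_inj.
by apply: hform_diag_lt0 => // l; rewrite mxE; have := enum_valP l; rewrite inE.
Qed.

Lemma negset_psd n (A : 'M[C]_n) : A \is hermsymmx ->
  exists2 Q : 'M[C]_(#|~: negset A|, n),
    row_free Q & forall u, 0 <= hform A (u *m Q).
Proof.
move=> hA; have hi := @enum_val_inj _ (mem (~: negset A)).
exists (rowsub enum_val (spectralmx A)).
  by apply/unitarymx_row_free/rowsub_unitarymx/spectral_unitarymx.
move=> u; rewrite hform_spectral_rowsub //; apply: hform_diag_ge0 => l.
have /mxOverP/(_ 0 (enum_val l)) d_real :=
  hermitian_spectral_diag_real hA.
by rewrite mxE; have := enum_valP l; rewrite !inE real_ltNge ?negbK.
Qed.

Lemma negdef_dim_le m n (A : 'M[C]_n) (M : 'M[C]_(m, n)) : A \is hermsymmx ->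
  (forall u, u != 0 -> hform A (u *m M) < 0) -> (m <= #|negset A|)%N.
Proof.
move=> hA M_neg; have [Q Q_free Q_psd] := negset_psd hA.
have := neg_psd_dim_le M_neg Q_psd Q_free.
have := cardsC (negset A); rewrite card_ord; lia.
Qed.

Lemma psd_dim_le q n (A : 'M[C]_n) (Q : 'M[C]_(q, n)) : A \is hermsymmx ->
  row_free Q -> (forall u, 0 <= hform A (u *m Q)) -> (#|negset A| + q <= n)%N.
Proof.
move=> hA Q_free Q_psd; have [M M_neg] := negset_negdef hA.
exact: neg_psd_dim_le M_neg Q_psd Q_free.
Qed.

Lemma negset_congr_le p n (A : 'M[C]_n) (E : 'M[C]_(p, n)) : A \is hermsymmx ->
  (#|negset (E *m A *m E ^t*)| <= #|negset A|)%N.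
Proof.
move=> hA; have [M M_neg] := negset_negdef (hermsym_congr E hA).
apply: (negdef_dim_le (M := M *m E)) => // u /M_neg.
by rewrite hform_conj mulmxA.
Qed.

Lemma negset_congr_ge p n (A : 'M[C]_n) (E : 'M[C]_(p, n)) : A \is hermsymmx ->
  row_free E -> (#|negset A| <= #|negset (E *m A *m E ^t*)| + (n - p))%N.
Proof.
move=> hA E_free; have [Q Q_free Q_psd] := negset_psd (hermsym_congr E hA).
have QE_free : row_free (Q *m E).
  by apply/inj_row_free => v; rewrite mulmxA => /eqP; rewrite !mulmx_free_eq0 // => /eqP.
have QE_psd u : 0 <= hform A (u *m (Q *m E)) by rewrite mulmxA -hform_conj.
have := psd_dim_le hA QE_free QE_psd.
have := cardsC (negset (E *m A *m E ^t*)); rewrite card_ord; lia.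
Qed.

Lemma char_poly_similar n (V D : 'M[C]_n) : V \in unitmx ->
  char_poly (invmx V *m D *m V) = char_poly D.
Proof.
move=> V_unit; rewrite /char_poly.
have -> : char_poly_mx (invmx V *m D *m V) =
   map_mx polyC (invmx V) *m char_poly_mx D *m map_mx polyC V.
  rewrite /char_poly_mx mulmxBr mulmxBl !map_mxM; congr (_ - _).
  by rewrite scalar_mxC -mulmxA -map_mxM mulVmx // map_mx1 mulmx1.
by rewrite !det_mulmx mulrAC -det_mulmx -map_mxM mulVmx // map_mx1 det1 mul1r.
Qed.

Lemma count_lt0_char_poly_roots n (A : 'M[C]_n) (s : seq C) : A \is hermsymmx ->
  char_poly A = \prod_(z <- s) ('X - z%:P) -> count (fun z => z < 0) s = #|negset A|.
Proof.
move=> hA A_roots.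
have A_spec : char_poly A =
    \prod_(z <- [seq spectral_diag A 0 i | i <- enum 'I_n]) ('X - z%:P).
  rewrite big_map enumT {1}(spectral_hermsym hA) -invmx_unitary ?spectral_unitarymx //.
  rewrite char_poly_similar ?spectral_unit // char_poly_trig ?diag_mx_is_trig //.
  by apply: eq_bigr => i _; rewrite mxE eqxx mulr1n.
have /permP -> := prod_XsubC_eq (etrans (esym A_roots) A_spec).
rewrite count_map /negset cardsE cardE /enum_mem size_filter count_filter.
by apply: eq_count => i; rewrite /= inE andbT.
Qed.

End Inertia.

Local Open Scope classical_set_scope.

Section PickMatrix.
Variable R : realType.
Local Notation C := R[i].

Lemma sqneg_hermsym n (A : 'M[C]_n) : A \is hermsymmx -> sqneg A = #|negset A|.
Proof.
move=> hA; rewrite /sqneg /eigseq; case: closed_field_poly_normal => s /=.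
by rewrite (monicP (char_poly_monic A)) scale1r; exact: count_lt0_char_poly_roots.
Qed.

Lemma pick_mx_hermsym n f (z : 'I_n -> C) : pick_mx f z \is hermsymmx.
Proof.
rewrite hermsymmxE; apply/eqP/matrixP => i j; rewrite !mxE.
rewrite rmorphM fmorphV !rmorphB !rmorph1 !rmorphM /= !conjCK.
by rewrite (mulrC _ (f (z i))) (mulrC _ (z i)).
Qed.

Lemma pick_mx_comp n p f (z : 'I_n -> C) (h : 'I_p -> 'I_n) :
  pick_mx f (z \o h) = mxsub h h (pick_mx f z).
Proof. by apply/matrixP => i j; rewrite !mxE. Qed.

Lemma sqneg_pick_le n f (z : 'I_n -> C) : (sqneg (pick_mx f z) <= n)%N.
Proof.
by rewrite sqneg_hermsym ?pick_mx_hermsym // -[X in (_ <= X)%N]card_ord max_card.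
Qed.

Lemma sqneg_pick_comp_le n p f (z : 'I_n -> C) (h : 'I_p -> 'I_n) :
  (sqneg (pick_mx f (z \o h)) <= sqneg (pick_mx f z))%N.
Proof.
have hP := pick_mx_hermsym f z.
rewrite pick_mx_comp mxsub_rowsub1 !sqneg_hermsym ?hermsym_congr //.
exact: negset_congr_le.
Qed.

Lemma sqneg_pick_comp_ge n p f (z : 'I_n -> C) (h : 'I_p -> 'I_n) : injective h ->
  (sqneg (pick_mx f z) <= sqneg (pick_mx f (z \o h)) + (n - p))%N.
Proof.
move=> hi; have hP := pick_mx_hermsym f z.
rewrite pick_mx_comp mxsub_rowsub1 !sqneg_hermsym ?hermsym_congr //.
apply: negset_congr_ge => //.
exact/unitarymx_row_free/rowsub1_unitarymx.
Qed.

Lemma sqneg_pick_le_kn (Dom : set C) f n (z : 'I_n -> C) :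
  injective z -> (forall i, Dom (z i)) -> (sqneg (pick_mx f z) <= kn Dom f n)%N.
Proof.
move=> zi zD; have lt_n1 : (sqneg (pick_mx f z) < n.+1)%N by rewrite ltnS sqneg_pick_le.
rewrite /kn (@leq_bigmax_cond _ _ (fun m : 'I_n.+1 => nat_of_ord m) (Ordinal lt_n1)) //.
by apply/asboolP; exists z.
Qed.

Lemma kn_le (Dom : set C) f n K :
  (forall z : 'I_n -> C, injective z -> (forall i, Dom (z i)) ->
     (sqneg (pick_mx f z) <= K)%N) ->
  (kn Dom f n <= K)%N.
Proof. by move=> z_le; apply/bigmax_leqP => m /asboolP [z [zi zD <-]]; exact: z_le. Qed.

Section Extension.
Variable Dom : set C.
Hypothesis Dom_fresh : forall s : seq C, exists2 x, Dom x & x \notin s.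

Lemma fresh_seq k (t : seq C) : uniq t ->
  exists u, [/\ size u = k, uniq (t ++ u) & forall x, x \in u -> Dom x].
Proof.
elim: k t => [|k IHk] t t_uniq; first by exists [::]; rewrite cats0.
have [x Dx xt] := Dom_fresh t.
have [|u [size_u tu_uniq u_Dom]] := IHk (rcons t x); first by rewrite rcons_uniq xt.
exists (x :: u); split; rewrite -?cat_rcons /= ?size_u //.
by move=> y; rewrite inE => /predU1P [->|/u_Dom].
Qed.

Lemma extend_injective m n (le_mn : (m <= n)%N) (z : 'I_m -> C) :
  injective z -> (forall i, Dom (z i)) ->
  exists2 z' : 'I_n -> C, injective z' /\ (forall i, Dom (z' i))
    & z = z' \o widen_ord le_mn.
Proof.
move=> zi zD; set t := [seq z i | i <- enum 'I_m].
have t_uniq : uniq t by rewrite map_inj_uniq ?enum_uniq.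
have [u [size_u tu_uniq u_Dom]] := fresh_seq (n - m) t_uniq.
have size_tu : size (t ++ u) = n by rewrite size_cat size_map size_enum_ord size_u subnKC.
exists (fun i => nth 0 (t ++ u) i); first split.
- move=> i j /eqP; rewrite nth_uniq ?size_tu // => /eqP; exact: val_inj.
- move=> i; have : nth 0 (t ++ u) i \in t ++ u by rewrite mem_nth ?size_tu.
  by rewrite mem_cat => /orP [/mapP [j _ ->]|/u_Dom].
apply: funext => i /=.
by rewrite nth_cat size_map size_enum_ord ltn_ord (nth_map i) ?size_enum_ord ?nth_ord_enum.
Qed.

Lemma kn_mono f m n : (m <= n)%N -> (kn Dom f m <= kn Dom f n)%N.
Proof.
move=> le_mn; apply: kn_le => z zi zD.
have [z' [z'i z'D] ->] := extend_injective le_mn zi zD.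
exact: leq_trans (sqneg_pick_comp_le _ _ _) (sqneg_pick_le_kn _ z'i z'D).
Qed.

Lemma bigmax_kn_le f k n :
  (\max_(r < (minn k n).+1) (kn Dom f (n - r) + r) <= kn Dom f n + k)%N.
Proof.
apply/bigmax_leqP => r _; have := ltn_ord r; rewrite ltnS leq_min => /andP [r_le_k _].
exact: leq_add (kn_mono f (leq_subr r n)) r_le_k.
Qed.

End Extension.

Lemma card_preim_range n k (y : 'I_n -> C) (w : 'I_k -> C) (T : {set 'I_n}) :
  injective y -> (forall i, i \in T -> exists j, w j = y i) -> (#|T| <= k)%N.
Proof.
move=> yi T_w; have yT_uniq : uniq [seq y i | i <- enum T] by rewrite map_inj_uniq ?enum_uniq.
have := uniq_leq_size yT_uniq (s2 := codom w).
rewrite size_map size_codom card_ord -cardE; apply=> _ /mapP [i iT ->].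
by rewrite mem_enum in iT; have [j <-] := T_w i iT; rewrite codom_f.
Qed.

Lemma sqneg_pick_split (Dom : set C) f g n (y : 'I_n -> C) (T : {set 'I_n}) :
  injective y -> (forall i, i \notin T -> Dom (y i) /\ g (y i) = f (y i)) ->
  (sqneg (pick_mx g y) <= kn Dom f #|~: T| + #|T|)%N.
Proof.
move=> yi y_out; pose h : 'I_#|~: T| -> 'I_n := enum_val.
have hi : injective h := @enum_val_inj _ _.
have hT k : h k \notin T by have := enum_valP k; rewrite inE.
have fg : pick_mx g (y \o h) = pick_mx f (y \o h).
  by apply/matrixP => a b; rewrite !mxE /= !(proj2 (y_out _ (hT _))).
have := sqneg_pick_comp_ge g y hi; rewrite fg.
have := sqneg_pick_le_kn f (inj_comp yi hi) (fun k => proj1 (y_out _ (hT k))).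
have := cardsC T; rewrite card_ord; lia.
Qed.

Lemma kn_le_bigmax (Dom Dg : set C) f g k (w : 'I_k -> C) n :
  (forall x, Dg x -> (Dom x /\ g x = f x) \/ range w x) ->
  (kn Dg g n <= \max_(r < (minn k n).+1) (kn Dom f (n - r) + r))%N.
Proof.
move=> Dg_split; apply: kn_le => y yi yDg.
pose T := [set i | ~~ `[< Dom (y i) /\ g (y i) = f (y i) >]]%SET.
have T_le_k : (#|T| <= k)%N.
  apply: (card_preim_range (w := w) yi) => i; rewrite inE => /asboolP yT.
  by case: (Dg_split _ (yDg i)) => // -[j _ wj]; exists j.
have T_le_n : (#|T| <= n)%N by rewrite -[X in (_ <= X)%N]card_ord max_card.
have T_lt : (#|T| < (minn k n).+1)%N by rewrite ltnS leq_min T_le_k.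
apply: leq_trans (leq_bigmax_cond (F := fun r : 'I__ => kn Dom f (n - r) + r)%N
                   (Ordinal T_lt) isT) => /=.
have -> : (n - #|T| = #|~: T|)%N by have := cardsC T; rewrite card_ord; lia.
by apply: sqneg_pick_split => // i; rewrite inE negbK => /asboolP.
Qed.

Lemma kn_le_extension (Dom Dg : set C) f g n :
  Dom `<=` Dg -> (forall x, Dom x -> g x = f x) -> (kn Dom f n <= kn Dg g n)%N.
Proof.
move=> DomDg gf; apply: kn_le => y yi yD; have -> : pick_mx f y = pick_mx g y.
  by apply/matrixP => a b; rewrite !mxE !gf.
by apply: sqneg_pick_le_kn => // i; apply: DomDg.
Qed.

Lemma discrete_disk_fresh (L : set C) : discrete_in_disk L ->
  forall s : seq C, exists2 x, (disk R `\` L) x & x \notin s.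
Proof.
case=> _ _ L_discrete s.
have [|r r_gt0 L_fin] := L_discrete 0; first by rewrite normr0 ltr01.
pose rho := r / (1 + r).
have r1_gt0 : 0 < 1 + r by lra.
have rho_gt0 : 0 < rho by rewrite divr_gt0.
have rho_lt1 : rho < 1 by rewrite ltr_pdivrMr //; lra.
have rho_ltr : rho < r by rewrite ltr_pdivrMr //; nra.
(* The points rho / (j + 1) are pairwise distinct and close to 0, where L is finite. *)
pose t (j : nat) : C := (rho / j.+1%:R)%:C%C.
have t_le j : `|t j| <= rho%:C%C.
  have q_ge0 : 0 <= rho / j.+1%:R by rewrite divr_ge0 ?ltW.
  by rewrite ger0_norm ?ler0c // lecR ler_pdivrMr ?ltr0Sn // (ler_peMr (ltW rho_gt0)) ?ler1n.
have t_inj : injective t.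
  move=> i j /complexI /(mulfI (lt0r_neq0 rho_gt0)) /invr_inj /eqP.
  by rewrite eqr_nat eqSS => /eqP.
pose G := (L `&` [set x | `|x - 0| < r%:C%C]) `|` [set` s].
have [j Gj] : exists j, ~ G (t j).
  apply/existsNP => allG; apply: infinite_nat.
  have <- : t @^-1` G = setT by apply/seteqP; split => // j _; exact: allG.
  apply: finite_preimage; first by move=> i j _ _; exact: t_inj.
  by rewrite finite_setU; split; [exact: L_fin | exact: finite_seq].
exists (t j); last by apply/negP => ts; apply: Gj; right.
split; first by rewrite /disk /= (le_lt_trans (t_le j)) ?ltcR.
by move=> Lt; apply: Gj; left; split; rewrite //= subr0 (le_lt_trans (t_le j)) ?ltcR.
Qed.

End PickMatrix.

Theorem lemma2p3 (R : realType) (L : set R[i]) (f : R[i] -> R[i]) :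
  discrete_in_disk L ->
  (* (1) *)
  (forall (k : nat) (w : 'I_k -> R[i]) (g : R[i] -> R[i]),
     (forall j, `|w j| < 1) ->
     (forall z, (disk R `\` L) z -> g z = f z) ->
     forall n : nat, (1 <= n)%N ->
       let Dg := (disk R `\` L) `|` range w in
       [/\ (kn (disk R `\` L) f n <= kn Dg g n)%N,
           (kn Dg g n <= \max_(r < (minn k n).+1) (kn (disk R `\` L) f (n - r) + r))%N
         & (\max_(r < (minn k n).+1) (kn (disk R `\` L) f (n - r) + r)
              <= kn (disk R `\` L) f n + k)%N]) /\
  (* (2) *)
  (forall (k : nat) (z : 'I_k -> R[i]) (g : R[i] -> R[i]),
     injective z ->
     (forall j, (disk R `\` L) (z j)) ->
     (forall x, (disk R `\` L) x -> ~ range z x -> g x = f x) ->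
     forall n : nat, (1 <= n)%N ->
       (kn (disk R `\` L) g n <= kn (disk R `\` L) f n + k)%N).
Proof.
move=> L_discrete; have D_fresh := discrete_disk_fresh L_discrete.
split=> [k w g _ gf n _ Dg|k z g _ _ gf n _].
  split; [by apply: kn_le_extension => // x Dx; left | | exact: bigmax_kn_le].
  by apply: (kn_le_bigmax (w := w)) => x [Dx|wx]; [left; split; last exact: gf | right].
apply: leq_trans (bigmax_kn_le D_fresh f k n) => /=.
apply: (kn_le_bigmax (w := z)) => x Dx.
by have [|zx] := pselect (range z x); [right | left; split; last exact: gf].
Qed.
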